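(* Assume the setting described in the context, and fix $x=(x_R,x_T)\in\mathbb{R}\times\mathbb{R}^2$ and an index $i$. Let $j=\pi(x,i)$, and suppose $a_i$ and $a_j$ lie on the same curve $\gamma$ of the environment, with arc-length abscissae $s_i,s_j$. Define the approximation error $$\psi_i:=(a_{\pi(0,i)}-a_{\pi(x,i)})\cdot n_i=(a_i-a_j)\cdot n_i .$$ Then $$(a_i+d_i(x)-a_{\pi(x,i)})\cdot n_i=(a_i+d_i(x)-a_{\pi(0,i)})\cdot n_i+\psi_i .$$ Hence the true ICP cost $\sum_i[(a_i+d_i(x)-a_{\pi(x,i)})\cdot n_i]^2$ equals $\sum_i[(a_i+d_i(x)-a_{\pi(0,i)})\cdot n_i+\psi_i]^2$. Moreover, if $\kappa\,|s_i-s_j|\le 1$, then $$|\psi_i|\le 8\,\kappa\,\|x_R\times a_i+x_T\|^2 .$$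
   Context: 2D setting. The environment is a finite union of pairwise disjoint $C^2$ curves in $\mathbb{R}^2$. Each curve $\gamma$ is parametrized by arc length $s$, so $\|\gamma'(s)\|=1$, and has curvature bounded by $\kappa\ge 0$, i.e. $\|\gamma''(s)\|\le\kappa$ for all $s$. A point cloud $a_1,\dots,a_N\in\mathbb{R}^2$ consists of distinct points on these curves. Write $a_k=\gamma(s_k)$, where $s_k$ is the arc-length abscissa of $a_k$ on the curve containing it. For each $i$, $n_i$ is a unit normal vector to that curve at $a_i$, so $n_i\cdot\gamma'(s_i)=0$. For a motion parameter $x=(x_R,x_T)\in\mathbb{R}\times\mathbb{R}^2$, the linearized displacement of $a_i$ is $d_i(x):=x_R\times a_i+x_T$. Here, for a scalar $x_R$ and $a=(a^1,a^2)$, $x_R\times a:=x_R(-a^2,a^1)$. $\pi(x,i)$ denotes an index $j\in\{1,\dots,N\}$ minimizing $\|a_i+d_i(x)-a_j\|$, i.e. closest-point matching of the displaced point to the original cloud. Note $\pi(0,i)=i$. *)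

From Stdlib Require Import Reals Lra Lia List.
Open Scope R_scope.

Definition vadd (u v : R * R) : R * R := (fst u + fst v, snd u + snd v).
Definition vsub (u v : R * R) : R * R := (fst u - fst v, snd u - snd v).
Definition dot (u v : R * R) : R := fst u * fst v + snd u * snd v.
Definition vnorm (u : R * R) : R := sqrt (dot u u).

Definition crossR (r : R) (a : R * R) : R * R := (- (r * snd a), r * fst a).

(* motion parameter x = (x_R, x_T); linearized displacement d(x) at a *)
Definition motion := (R * (R * R))%type.
Definition disp (x : motion) (a : R * R) : R * R := vadd (crossR (fst x) a) (snd x).

Record curve := mkCurve {
  cdom : R -> Prop;
  cpos : R -> R * R;
  cvel : R -> R * R;
  cacc : R -> R * R }.

Definition open_interval (D : R -> Prop) : Prop :=
  (exists u, D u) /\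
  (forall u v w, D u -> D v -> u <= w <= v -> D w) /\
  (forall u, D u -> exists e, 0 < e /\ forall w, Rabs (w - u) < e -> D w).

Definition is_arc_curve (kappa : R) (g : curve) : Prop :=
  open_interval (cdom g) /\
  forall s, cdom g s ->
    derivable_pt_lim (fun t => fst (cpos g t)) s (fst (cvel g s)) /\
    derivable_pt_lim (fun t => snd (cpos g t)) s (snd (cvel g s)) /\
    derivable_pt_lim (fun t => fst (cvel g t)) s (fst (cacc g s)) /\
    derivable_pt_lim (fun t => snd (cvel g t)) s (snd (cacc g s)) /\
    continuity_pt (fun t => fst (cacc g t)) s /\
    continuity_pt (fun t => snd (cacc g t)) s /\
    vnorm (cvel g s) = 1 /\
    vnorm (cacc g s) <= kappa.

Definition pairwise_disjoint (env : list curve) : Prop :=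
  forall p q g h, (p < length env)%nat -> (q < length env)%nat -> p <> q ->
    nth_error env p = Some g -> nth_error env q = Some h ->
    forall s t, cdom g s -> cdom h t -> cpos g s <> cpos h t.

Definition is_closest (N : nat) (a : nat -> R * R) (x : motion) (i j : nat) : Prop :=
  (j < N)%nat /\
  forall k, (k < N)%nat ->
    vnorm (vsub (vadd (a i) (disp x (a i))) (a j))
    <= vnorm (vsub (vadd (a i) (disp x (a i))) (a k)).

Fixpoint sumN (N : nat) (f : nat -> R) : R :=
  match N with O => 0 | S n => sumN n f + f n end.

From Stdlib Require Import Reals Lra Lia List.
Open Scope R_scope.

(* The rest position matches every point with itself, so [psi_i] is the normal
   component of the chord from [gamma(s_i)] to [gamma(s_j)].  Second-order Taylor
   bounds along the unit tangent and the unit normal at [s_i] give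
   [|s_j - s_i| <= 2 |chord|] (this is where [kappa |s_j - s_i| <= 1] enters) and
   [|psi_i| <= kappa/2 (s_j - s_i)^2 <= 2 kappa |chord|^2].  Finally [a_j] is at least
   as close to the displaced point as [a_i], so [|chord| <= 2 |d_i(x)|]. *)

Lemma dot_ge0 u : 0 <= dot u u.
Proof. unfold dot; nra. Qed.

Lemma vnorm_ge0 u : 0 <= vnorm u.
Proof. apply sqrt_pos. Qed.

Lemma vnorm_sqr u : vnorm u * vnorm u = dot u u.
Proof. apply sqrt_sqrt, dot_ge0. Qed.

Lemma Rabs_dot_le u w : Rabs (dot u w) <= vnorm u * vnorm w.
Proof.
  unfold vnorm. rewrite <- sqrt_mult_alt by apply dot_ge0.
  rewrite <- sqrt_Rsqr_abs. apply sqrt_le_1_alt.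
  destruct u as [u1 u2], w as [w1 w2]; unfold Rsqr, dot; simpl.
  assert (0 <= (u1 * w2 - u2 * w1) * (u1 * w2 - u2 * w1)) by apply Rle_0_sqr.
  nra.
Qed.

Lemma vnorm_vsub_le u w : vnorm (vsub u w) <= vnorm u + vnorm w.
Proof.
  assert (Huw := Rle_abs (- dot u w)). rewrite Rabs_Ropp in Huw. assert (Hcs := Rabs_dot_le u w).
  assert (Hu := vnorm_ge0 u). assert (Hw := vnorm_ge0 w).
  assert (Eu := vnorm_sqr u). assert (Ew := vnorm_sqr w).
  unfold vnorm at 1. rewrite <- (sqrt_Rsqr (vnorm u + vnorm w)) by lra.
  apply sqrt_le_1_alt. unfold Rsqr.
  replace (dot (vsub u w) (vsub u w)) with (dot u u - 2 * dot u w + dot w w)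
    by (unfold dot, vsub; simpl; ring).
  rewrite <- Eu, <- Ew. nra.
Qed.

Lemma vnorm_eq0 u : vnorm u = 0 -> u = (0, 0).
Proof.
  intro H. apply sqrt_eq_0 in H; [|apply dot_ge0].
  destruct u as [u1 u2]; unfold dot in H; simpl in H.
  assert (u1 = 0) by nra. assert (u2 = 0) by nra. subst; reflexivity.
Qed.

Lemma dot_vsub_split u v w m : dot (vsub u w) m = dot (vsub u v) m + dot (vsub v w) m.
Proof. unfold dot, vsub; simpl; ring. Qed.

Lemma derivable_pt_lim_dot_const (p dp : R -> R * R) (w : R * R) t :
  derivable_pt_lim (fun r => fst (p r)) t (fst (dp t)) ->
  derivable_pt_lim (fun r => snd (p r)) t (snd (dp t)) ->
  derivable_pt_lim (fun r => dot (p r) w) t (dot (dp t) w).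
Proof.
  intros H1 H2. unfold dot.
  replace (fst (dp t) * fst w + snd (dp t) * snd w)
    with (fst (dp t) * fst w + fst (p t) * 0 + (snd (dp t) * snd w + snd (p t) * 0)) by ring.
  apply derivable_pt_lim_plus; apply derivable_pt_lim_mult; auto; apply derivable_pt_lim_const.
Qed.

Lemma derivable_pt_lim_scal_sqr_sub (k u t : R) :
  derivable_pt_lim (fun r => k * ((r - u) * (r - u))) t (2 * k * (t - u)).
Proof.
  replace (2 * k * (t - u)) with (k * ((1 - 0) * (t - u) + (t - u) * (1 - 0))) by ring.
  apply derivable_pt_lim_scal with (f := fun r => (r - u) * (r - u)).
  apply (derivable_pt_lim_mult (fun r => r - u) (fun r => r - u));
    (apply derivable_pt_lim_minus; [apply derivable_pt_lim_id | apply derivable_pt_lim_const]).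
Qed.

Lemma derivable_pt_lim_scal_id (c t : R) : derivable_pt_lim (fun r => c * r) t c.
Proof.
  pose proof (derivable_pt_lim_scal id c t 1 (derivable_pt_lim_id t)) as H.
  rewrite Rmult_1_r in H. exact H.
Qed.

Lemma derivable_pt_lim_sub_linear (f : R -> R) (c t l : R) :
  derivable_pt_lim f t l -> derivable_pt_lim (fun r => f r - c * r) t (l - c).
Proof.
  intro Hf. exact (derivable_pt_lim_minus f (fun r => c * r) t l c Hf (derivable_pt_lim_scal_id c t)).
Qed.

Section IncrementBounds.

Variables (a b : R).
Hypothesis Hab : a <= b.

Lemma increment_le_of_deriv_le (f g df dg : R -> R) :
  (forall t, a <= t <= b -> derivable_pt_lim f t (df t)) ->
  (forall t, a <= t <= b -> derivable_pt_lim g t (dg t)) ->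
  (forall t, a <= t <= b -> df t <= dg t) ->
  f b - f a <= g b - g a.
Proof.
  intros Hf Hg Hle. destruct (Req_dec a b) as [<-|Hne]; [lra|].
  destruct (MVT_cor2 (fun t => g t - f t) (fun t => dg t - df t) a b) as [t [Ht Ht']].
  - lra.
  - intros u Hu. exact (derivable_pt_lim_minus g f u _ _ (Hg u Hu) (Hf u Hu)).
  - assert (Ht'' := Hle t ltac:(lra)).
    assert (0 <= (dg t - df t) * (b - a)) by (apply Rmult_le_pos; lra).
    lra.
Qed.

Lemma Rabs_increment_le_of_deriv (f h df dh : R -> R) :
  (forall t, a <= t <= b -> derivable_pt_lim f t (df t)) ->
  (forall t, a <= t <= b -> derivable_pt_lim h t (dh t)) ->
  (forall t, a <= t <= b -> Rabs (df t) <= dh t) ->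
  Rabs (f b - f a) <= h b - h a.
Proof.
  intros Hf Hh Hle. apply Rabs_le. split.
  - assert (L := increment_le_of_deriv_le (fun t => - h t) f (fun t => - dh t) df).
    enough (- h b - - h a <= f b - f a) by lra.
    apply L; [intros t Ht; exact (derivable_pt_lim_opp h t _ (Hh t Ht)) | exact Hf |].
    intros t Ht. assert (E := Hle t Ht). assert (E' := Rle_abs (- df t)). rewrite Rabs_Ropp in E'. lra.
  - apply (increment_le_of_deriv_le f h df dh Hf Hh).
    intros t Ht. assert (E := Hle t Ht). assert (E' := Rle_abs (df t)). lra.
Qed.

End IncrementBounds.

Lemma Rabs_sub_le_of_deriv_bound (f df : R -> R) (M a b : R) :
  (forall t, a <= t <= b -> derivable_pt_lim f t (df t) /\ Rabs (df t) <= M) ->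
  forall u t, a <= u <= b -> a <= t <= b -> Rabs (f t - f u) <= M * Rabs (t - u).
Proof.
  intros Hf.
  assert (Hord : forall u t, a <= u -> u <= t -> t <= b -> Rabs (f t - f u) <= M * (t - u)).
  { intros u t Hu Hut Ht.
    replace (M * (t - u)) with (M * t - M * u) by ring.
    apply (Rabs_increment_le_of_deriv u t Hut f (fun r => M * r) df (fun _ => M)).
    - intros r Hr. apply Hf. lra.
    - intros r _. apply derivable_pt_lim_scal_id.
    - intros r Hr. apply Hf. lra. }
  intros u t Hu Ht. destruct (Rle_dec u t).
  - rewrite (Rabs_right (t - u)) by lra. apply Hord; lra.
  - rewrite Rabs_minus_sym, (Rabs_left (t - u)) by lra.
    replace (- (t - u)) with (u - t) by ring. apply Hord; lra.
Qed.

Lemma taylor_order1_bound (F F1 F2 : R -> R) (kappa a b s0 s1 : R) :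
  (forall t, a <= t <= b ->
     derivable_pt_lim F t (F1 t) /\ derivable_pt_lim F1 t (F2 t) /\ Rabs (F2 t) <= kappa) ->
  a <= s0 <= b -> a <= s1 <= b ->
  Rabs (F s1 - F s0 - F1 s0 * (s1 - s0)) <= kappa / 2 * (s1 - s0) ^ 2.
Proof.
  intros HF Hs0 Hs1.
  assert (HF1 : forall t, a <= t <= b -> Rabs (F1 t - F1 s0) <= kappa * Rabs (t - s0)).
  { intros t Ht. apply (Rabs_sub_le_of_deriv_bound F1 F2 kappa a b); auto.
    intros r Hr. split; apply HF; exact Hr. }
  set (G := fun r => F r - F1 s0 * r).
  assert (HG : forall t, a <= t <= b -> derivable_pt_lim G t (F1 t - F1 s0)).
  { intros t Ht. apply derivable_pt_lim_sub_linear, HF, Ht. }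
  replace (F s1 - F s0 - F1 s0 * (s1 - s0)) with (G s1 - G s0) by (unfold G; ring).
  destruct (Rle_dec s0 s1) as [Hle|Hgt].
  - set (h := fun r => kappa / 2 * ((r - s0) * (r - s0))).
    replace (kappa / 2 * (s1 - s0) ^ 2) with (h s1 - h s0) by (unfold h; ring).
    apply (Rabs_increment_le_of_deriv s0 s1 Hle G h (fun t => F1 t - F1 s0) (fun r => 2 * (kappa / 2) * (r - s0))).
    + intros t Ht. apply HG. lra.
    + intros t _. apply derivable_pt_lim_scal_sqr_sub.
    + intros t Ht. apply Rle_trans with (kappa * Rabs (t - s0)); [apply HF1; lra|].
      rewrite Rabs_right by lra. lra.
  - set (h := fun r => - (kappa / 2) * ((r - s0) * (r - s0))).
    rewrite Rabs_minus_sym.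
    replace (kappa / 2 * (s1 - s0) ^ 2) with (h s0 - h s1) by (unfold h; ring).
    apply (Rabs_increment_le_of_deriv s1 s0 ltac:(lra) G h (fun t => F1 t - F1 s0) (fun r => 2 * - (kappa / 2) * (r - s0))).
    + intros t Ht. apply HG. lra.
    + intros t _. apply derivable_pt_lim_scal_sqr_sub.
    + intros t Ht. apply Rle_trans with (kappa * Rabs (t - s0)); [apply HF1; lra|].
      rewrite Rabs_left1 by lra. lra.
Qed.

Section ArcCurve.

Variables (kappa : R) (g : curve).
Hypothesis Hg : is_arc_curve kappa g.

Lemma arc_curve_kappa_ge0 s0 : cdom g s0 -> 0 <= kappa.
Proof.
  intro Hs0. destruct (proj2 Hg s0 Hs0) as (_ & _ & _ & _ & _ & _ & _ & Hacc).
  eapply Rle_trans; [apply vnorm_ge0 | exact Hacc].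
Qed.

Lemma arc_curve_taylor s0 s1 w :
  cdom g s0 -> cdom g s1 -> vnorm w = 1 ->
  Rabs (dot (vsub (cpos g s1) (cpos g s0)) w - dot (cvel g s0) w * (s1 - s0))
    <= kappa / 2 * (s1 - s0) ^ 2.
Proof.
  intros Hs0 Hs1 Hw. destruct Hg as [[_ [Hconv _]] Hd].
  replace (dot (vsub (cpos g s1) (cpos g s0)) w)
    with (dot (cpos g s1) w - dot (cpos g s0) w) by (unfold dot, vsub; simpl; ring).
  apply (taylor_order1_bound (fun t => dot (cpos g t) w) (fun t => dot (cvel g t) w)
           (fun t => dot (cacc g t) w) kappa (Rmin s0 s1) (Rmax s0 s1));
    [| split; [apply Rmin_l | apply Rmax_l] | split; [apply Rmin_r | apply Rmax_r]].
  intros t Ht.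
  assert (Dt : cdom g t).
  { apply (Hconv (Rmin s0 s1) (Rmax s0 s1)); auto;
      unfold Rmin, Rmax; destruct (Rle_dec s0 s1); auto. }
  destruct (Hd t Dt) as (dp1 & dp2 & dv1 & dv2 & _ & _ & _ & Hacc).
  split; [|split]; try (apply derivable_pt_lim_dot_const; assumption).
  eapply Rle_trans; [apply Rabs_dot_le|]. rewrite Hw. lra.
Qed.

Lemma arc_curve_abscissa_le_chord s0 s1 :
  cdom g s0 -> cdom g s1 -> kappa * Rabs (s1 - s0) <= 1 ->
  Rabs (s1 - s0) <= 2 * vnorm (vsub (cpos g s1) (cpos g s0)).
Proof.
  intros Hs0 Hs1 Hks.
  destruct (proj2 Hg s0 Hs0) as (_ & _ & _ & _ & _ & _ & Hunit & _).
  set (ch := vsub (cpos g s1) (cpos g s0)). set (D := s1 - s0) in *.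
  assert (HT := arc_curve_taylor s0 s1 (cvel g s0) Hs0 Hs1 Hunit). fold ch D in HT.
  assert (Hvv : dot (cvel g s0) (cvel g s0) = 1) by (rewrite <- vnorm_sqr, Hunit; ring).
  rewrite Hvv, Rmult_1_l, <- pow2_abs in HT.
  assert (Hcs := Rabs_dot_le ch (cvel g s0)). rewrite Hunit, Rmult_1_r in Hcs.
  assert (Htri := Rabs_triang_inv D (dot ch (cvel g s0))).
  rewrite Rabs_minus_sym in Htri.
  assert (HD := Rabs_pos D). assert (Hk := arc_curve_kappa_ge0 s0 Hs0).
  assert (kappa / 2 * Rabs D ^ 2 <= Rabs D / 2) by nra.
  lra.
Qed.

Lemma arc_curve_normal_deviation s0 s1 w :
  cdom g s0 -> cdom g s1 -> vnorm w = 1 -> dot w (cvel g s0) = 0 ->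
  kappa * Rabs (s1 - s0) <= 1 ->
  Rabs (dot (vsub (cpos g s1) (cpos g s0)) w)
    <= 2 * kappa * vnorm (vsub (cpos g s1) (cpos g s0)) ^ 2.
Proof.
  intros Hs0 Hs1 Hw Hwt Hks.
  assert (HT := arc_curve_taylor s0 s1 w Hs0 Hs1 Hw).
  replace (dot (cvel g s0) w) with 0 in HT by (rewrite <- Hwt; unfold dot; ring).
  rewrite Rmult_0_l, Rminus_0_r, <- pow2_abs in HT.
  assert (HD := arc_curve_abscissa_le_chord s0 s1 Hs0 Hs1 Hks).
  assert (Hk := arc_curve_kappa_ge0 s0 Hs0).
  assert (Hsq : Rabs (s1 - s0) ^ 2 <= (2 * vnorm (vsub (cpos g s1) (cpos g s0))) ^ 2)
    by (apply pow_incr; split; [apply Rabs_pos | exact HD]).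
  nra.
Qed.

End ArcCurve.

Lemma vsub_vadd_l p d : vsub (vadd p d) p = d.
Proof. destruct p, d; unfold vsub, vadd; simpl; f_equal; ring. Qed.

Lemma closest_at_rest N a i j :
  (i < N)%nat -> is_closest N a (0, (0, 0)) i j -> a j = a i.
Proof.
  intros Hi [_ Hmin]. specialize (Hmin i Hi).
  replace (disp (0, (0, 0)) (a i)) with (0, 0) in Hmin
    by (unfold disp, crossR, vadd; simpl; f_equal; ring).
  rewrite vsub_vadd_l in Hmin.
  assert (Hz : vnorm (vsub (vadd (a i) (0, 0)) (a j)) = 0).
  { apply Rle_antisym; [|apply vnorm_ge0].
    rewrite Hmin. unfold vnorm, dot; simpl. rewrite Rmult_0_l, Rplus_0_l. apply Req_le, sqrt_0. }
  apply vnorm_eq0 in Hz. destruct (a i), (a j). unfold vsub, vadd in Hz; simpl in Hz.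
  injection Hz as H1 H2. f_equal; lra.
Qed.

Lemma closest_chord_le N a x i j :
  (i < N)%nat -> is_closest N a x i j ->
  vnorm (vsub (a j) (a i)) <= 2 * vnorm (disp x (a i)).
Proof.
  intros Hi [_ Hmin]. specialize (Hmin i Hi).
  set (P := vadd (a i) (disp x (a i))) in *.
  assert (HPi : vsub P (a i) = disp x (a i)) by apply vsub_vadd_l.
  replace (vsub (a j) (a i)) with (vsub (vsub P (a i)) (vsub P (a j)))
    by (unfold vsub; simpl; f_equal; ring).
  rewrite HPi in Hmin |- *.
  assert (Htri := vnorm_vsub_le (disp x (a i)) (vsub P (a j))). lra.
Qed.

Lemma sumN_ext N f g : (forall k, f k = g k) -> sumN N f = sumN N g.
Proof. intros H; induction N; simpl; [reflexivity|]; rewrite IHN, H; reflexivity. Qed.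

Theorem mainTheorem2
  (kappa : R) (env : list curve)
  (N : nat) (a : nat -> R * R) (s : nat -> R) (c : nat -> curve)
  (n : nat -> R * R) (pi : motion -> nat -> nat)
  (x : motion) (i : nat) :
  0 <= kappa ->
  (forall g, In g env -> is_arc_curve kappa g) ->
  pairwise_disjoint env ->
  (forall k, (k < N)%nat ->
     In (c k) env /\ cdom (c k) (s k) /\ a k = cpos (c k) (s k)) ->
  (forall k l, (k < N)%nat -> (l < N)%nat -> k <> l -> a k <> a l) ->
  (forall k, (k < N)%nat ->
     vnorm (n k) = 1 /\ dot (n k) (cvel (c k) (s k)) = 0) ->
  (forall y k, (k < N)%nat -> is_closest N a y k (pi y k)) ->
  (i < N)%nat ->
  c (pi x i) = c i ->
  let psi := fun k => dot (vsub (a (pi (0, (0, 0)) k)) (a (pi x k))) (n k) in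
  let j := pi x i in
  dot (vsub (vadd (a i) (disp x (a i))) (a (pi x i))) (n i)
    = dot (vsub (vadd (a i) (disp x (a i))) (a (pi (0, (0, 0)) i))) (n i) + psi i /\
  sumN N (fun k => (dot (vsub (vadd (a k) (disp x (a k))) (a (pi x k))) (n k)) ^ 2)
    = sumN N (fun k =>
        (dot (vsub (vadd (a k) (disp x (a k))) (a (pi (0, (0, 0)) k))) (n k) + psi k) ^ 2) /\
  (kappa * Rabs (s i - s j) <= 1 ->
     Rabs (psi i) <= 8 * kappa * (vnorm (disp x (a i))) ^ 2).
Proof.
  intros Hk Henv _ Hpt _ Hn Hcl Hi Hc psi j.
  split; [|split].
  - apply dot_vsub_split.
  - apply sumN_ext. intro k. unfold psi. rewrite (dot_vsub_split _ (a (pi (0, (0, 0)) k))). reflexivity.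
  - intro Hks.
    destruct (Hcl x i Hi) as [Hj _]. fold j in Hj, Hc.
    destruct (Hpt i Hi) as (Hin & Hsi & Hai).
    destruct (Hpt j Hj) as (_ & Hsj & Haj). rewrite Hc in Hsj, Haj.
    destruct (Hn i Hi) as [Hni Hnt].
    assert (Hpsi : psi i = - dot (vsub (a j) (a i)) (n i)).
    { unfold psi. rewrite (closest_at_rest N a i _ Hi (Hcl _ i Hi)). fold j.
      unfold dot, vsub; simpl; ring. }
    rewrite Hpsi, Rabs_Ropp. rewrite Rabs_minus_sym in Hks.
    assert (Hdev := arc_curve_normal_deviation kappa (c i) (Henv _ Hin) (s i) (s j) (n i)
                      Hsi Hsj Hni Hnt Hks).
    rewrite <- Hai, <- Haj in Hdev.
    assert (Hch := closest_chord_le N a x i j Hi (Hcl x i Hi)).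
    assert (Hsq : vnorm (vsub (a j) (a i)) ^ 2 <= (2 * vnorm (disp x (a i))) ^ 2)
      by (apply pow_incr; split; [apply vnorm_ge0 | exact Hch]).
    nra.
Qed.
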